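(* Let $k > k' > 0$. There exists a $k$-local function $f:\{0,1\}^n\to\mathbb{R}$ with $\max_{x\in\{0,1\}^n}|f(x)| \le 1$ such that for every $k'$-local function $g:\{0,1\}^n\to\mathbb{R}$, $$\max_{x\in\{0,1\}^n}|f(x) - g(x)| \ge 2^{-k'}.$$
   Context: A function $f:\{0,1\}^n\to\mathbb{R}$ is $k$-local if it can be written as a sum $f = \sum_i f_i$ of functions $f_i:\{0,1\}^n\to\mathbb{R}$ each depending on at most $k$ of its inputs. *)

From HB Require Import structures.
From mathcomp Require Import all_boot all_order all_algebra.
From mathcomp Require Import reals.
Set Implicit Arguments. Unset Strict Implicit. Unset Printing Implicit Defensive.
Import Order.TTheory GRing.Theory Num.Theory.
Local Open Scope ring_scope.

Definition cube (n : nat) := {ffun 'I_n -> bool}.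

Definition depends_only_on (R : realType) (n : nat) (h : cube n -> R)
  (S : {set 'I_n}) : Prop :=
  forall x y : cube n, (forall i, i \in S -> x i = y i) -> h x = h y.

Definition depends_on_at_most (R : realType) (n k : nat) (h : cube n -> R) : Prop :=
  exists S : {set 'I_n}, (#|S| <= k)%N /\ depends_only_on h S.

Definition k_local (R : realType) (n k : nat) (f : cube n -> R) : Prop :=
  exists (m : nat) (fs : 'I_m -> cube n -> R),
    (forall i, depends_on_at_most k (fs i)) /\
    forall x, f x = \sum_(i < m) fs i x.

From HB Require Import structures.
From mathcomp Require Import all_boot all_order all_algebra.
From mathcomp Require Import reals.
Import Order.TTheory GRing.Theory Num.Theory.
Local Open Scope ring_scope.

(* The parity function chi_T of a k-set T of coordinates does the job, even at
   distance 1 rather than 2^-k'.  It is orthogonal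
   to every function h that depends only on a set S of fewer than k
   coordinates: pick j in T \ S; the involution flipping x_j negates chi_T and
   fixes h, so the correlation sum_x chi_T(x) h(x) equals its own opposite.
   Hence chi_T is orthogonal to every k'-local g, and
   sum_x chi_T(x) (chi_T(x) - g(x)) = 2^n forces some x with
   |chi_T(x) - g(x)| >= chi_T(x) (chi_T(x) - g(x)) >= 1. *)

Lemma exists_set_card (T : finType) (k : nat) :
  (k <= #|T|)%N -> exists A : {set T}, #|A| = k.
Proof.
case/card_geqP=> s [s_uniq s_size _]; exists [set x in s].
by rewrite cardsE (card_uniqP s_uniq).
Qed.

Lemma exists_ge_of_sum_ge (R : realDomainType) (T : finType) (F : T -> R)
    (a : R) :
  (0 < #|T|)%N -> a *+ #|T| <= \sum_x F x -> exists x, a <= F x.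
Proof.
move=> /card_gt0P [x0 _] a_le_sum; apply/existsP; apply: contraLR a_le_sum.
rewrite negb_exists -ltNge -sumr_const => /forallP F_lt_a.
by apply: ltr_sum => [|x _]; [apply/hasP; exists x0 | rewrite ltNge F_lt_a].
Qed.

Section Parity.
Context {R : realType} {n : nat}.

Definition parity (T : {set 'I_n}) (x : cube n) : R :=
  \prod_(i in T) (-1) ^+ x i.

Definition flip (j : 'I_n) (x : cube n) : cube n :=
  [ffun i => if i == j then ~~ x i else x i].

Lemma flipK (j : 'I_n) : involutive (flip j).
Proof.
by move=> x; apply/ffunP=> i; rewrite !ffunE; case: eqP; rewrite ?negbK.
Qed.

Lemma normr_parity (T : {set 'I_n}) (x : cube n) : `|parity T x| = 1.
Proof. by rewrite normr_prod; apply: big1 => i _; rewrite normr_sign. Qed.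

Lemma sqrr_parity (T : {set 'I_n}) (x : cube n) : parity T x ^+ 2 = 1.
Proof. by rewrite -prodrXl; apply: big1 => i _; rewrite sqrr_sign. Qed.

Lemma parity_flip (T : {set 'I_n}) (j : 'I_n) (x : cube n) :
  j \in T -> parity T (flip j x) = - parity T x.
Proof.
move=> jT; rewrite /parity !(bigD1 j jT) /= ffunE eqxx signrN mulNr.
congr (- (_ * _)); apply: eq_bigr => i /andP [_ /negbTE ij].
by rewrite ffunE ij.
Qed.

Lemma depends_only_on_flip {h : cube n -> R} {S : {set 'I_n}} {j : 'I_n}
    (x : cube n) :
  depends_only_on h S -> j \notin S -> h (flip j x) = h x.
Proof.
move=> h_dep jS; apply: h_dep => i iS; rewrite ffunE.
by case: eqP => // ij; rewrite -ij iS in jS.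
Qed.

Lemma parity_orthogonal_depends (T S : {set 'I_n}) (h : cube n -> R) :
  depends_only_on h S -> (#|S| < #|T|)%N -> \sum_x parity T x * h x = 0.
Proof.
move=> h_dep ltST.
have /subsetPn [j jT jS] : ~~ (T \subset S).
  by apply: contraTN ltST => /subset_leq_card; rewrite -leqNgt.
set s := \sum_x _; have s_opp : s = - s.
  rewrite {1}/s (reindex_inj (inv_inj (flipK j))) -sumrN.
  apply: eq_bigr => x _.
  by rewrite parity_flip // (depends_only_on_flip x h_dep jS) mulNr.
by apply/eqP; move/eqP: s_opp; rewrite -subr_eq0 opprK -mulr2n mulrn_eq0.
Qed.

Lemma parity_orthogonal_local {T : {set 'I_n}} {k : nat} {g : cube n -> R} :
  k_local k g -> (k < #|T|)%N -> \sum_x parity T x * g x = 0.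
Proof.
move=> [m [gs [gs_dep g_sum]]] ltkT.
under eq_bigr => x _ do rewrite g_sum mulr_sumr.
rewrite exchange_big; apply: big1 => i _ /=.
have [S [cardS S_dep]] := gs_dep i.
exact: parity_orthogonal_depends S_dep (leq_ltn_trans cardS ltkT).
Qed.

Lemma parity_local (T : {set 'I_n}) : k_local #|T| (parity T).
Proof.
exists 1%N, (fun=> parity T); split=> [_|x]; last by rewrite big_ord1.
by exists T; split=> // x y xy; apply: eq_bigr => i /xy ->.
Qed.

Lemma exists_far_from_parity {T : {set 'I_n}} {g : cube n -> R} :
  \sum_x parity T x * g x = 0 -> exists x, 1 <= `|parity T x - g x|.
Proof.
move=> orth.
have [x le1] : exists x, 1 <= parity T x * (parity T x - g x).
  apply: exists_ge_of_sum_ge; first by apply/card_gt0P; exists [ffun=> false].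
  under eq_bigr => x _ do rewrite mulrBr -expr2 sqrr_parity.
  by rewrite sumrB orth subr0 sumr_const.
exists x; apply: (le_trans le1); rewrite (le_trans (ler_norm _)) //.
by rewrite normrM normr_parity mul1r.
Qed.

End Parity.

Theorem lemma12 (R : realType) (n k k' : nat) :
  (0 < k')%N -> (k' < k)%N -> (k <= n)%N ->
  exists f : cube n -> R,
    k_local k f /\
    (forall x, `|f x| <= 1) /\
    (forall g : cube n -> R, k_local k' g ->
       exists x, (2 ^- k' : R) <= `|f x - g x|).
Proof.
move=> _ ltk'k lekn.
have [T cardT] : exists T : {set 'I_n}, #|T| = k.
  by apply: exists_set_card; rewrite card_ord.
exists (parity T); split; first by rewrite -cardT; apply: parity_local.
split=> [x|g g_local]; first by rewrite normr_parity.
have orth : \sum_x parity T x * g x = 0.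
  by apply: parity_orthogonal_local g_local _; rewrite cardT.
have [x far] := exists_far_from_parity orth.
exists x; apply: le_trans far.
by rewrite invf_le1 ?exprn_ege1 ?exprn_gt0 // ler1n.
Qed.
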